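(* Let $\mathbb{F}$ be a field of characteristic not equal to $2$, $d \ge 1$, and $\ell\in\mathbb{F}$ nonzero. If there exist points $v_0,\dots,v_d\in\mathbb{F}^d$ with $\|v_i-v_j\| = \ell$ for all $i\ne j$ (an equilateral $d$-simplex of sidelength $\ell$), then $(d+1)\left(\frac{\ell}{2}\right)^d$ is a square in $\mathbb{F}$. If moreover $d$ is even, then $d+1$ is a square in $\mathbb{F}$.
   Context: For $x,y\in\mathbb{F}^d$, $\|x-y\| = \sum_{i=1}^d (x_i-y_i)^2\in\mathbb{F}$. *)

From mathcomp Require Import all_boot all_algebra.
Set Implicit Arguments. Unset Strict Implicit. Unset Printing Implicit Defensive.
Import GRing.Theory.
Local Open Scope ring_scope.

(* Squared "distance" on F^d (a quadratic form value in F, no square root):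
   ||x - y|| = sum_i (x_i - y_i)^2. *)
Definition sqdist (F : fieldType) (d : nat) (x y : 'rV[F]_d) : F :=
  \sum_(i < d) (x 0 i - y 0 i) ^+ 2.

Definition is_square (F : fieldType) (a : F) : Prop := exists b : F, a = b ^+ 2.

(* Translate the simplex so that v_0 = 0 and let W be the d x d matrix with
   rows v_i - v_0.  By polarization, equal side lengths l force the Gram matrix
   W W^T to be (l/2)(I + J), with J the all-ones matrix, whose determinant is
   (d+1)(l/2)^d by the matrix determinant lemma; so this quantity is the square
   (det W)^2.  For even d, (l/2)^d is itself a nonzero square. *)

From mathcomp Require Import all_boot all_algebra.
From mathcomp Require Import ring.
Import GRing.Theory.
Local Open Scope ring_scope.
Set Implicit Arguments.
Unset Strict Implicit.

Lemma det1D_mulmx_tr (R : comNzRingType) n (u v : 'cV[R]_n) :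
  \det (1%:M + u *m v^T) = 1 + (v^T *m u) 0 0.
Proof.
(* Factor the block matrix [[1, -v^T], [u, 1]] in two triangular ways. *)
have lu_factor : block_mx 1%:M (- v^T) u 1%:M =
    block_mx 1%:M 0 u 1%:M *m block_mx 1%:M (- v^T) 0 (1%:M + u *m v^T).
  rewrite mulmx_block !mulmx1 !mul1mx ?mulmx0 ?mul0mx ?addr0 ?add0r.
  by rewrite mulmxN addrCA addNr addr0.
have ul_factor : block_mx 1%:M (- v^T) u 1%:M =
    block_mx 1%:M (- v^T) 0 1%:M *m block_mx (1%:M + v^T *m u) 0 u 1%:M.
  rewrite mulmx_block !mulmx1 !mul1mx ?mulmx0 ?mul0mx ?addr0 ?add0r.
  by rewrite mulNmx addrK.
have := congr1 determinant lu_factor.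
rewrite ul_factor !det_mulmx !det_ublock !det_lblock !det1 !mul1r !mulr1.
by rewrite det_mx11 => <-; rewrite !mxE eqxx.
Qed.

Lemma det1D_const_mx1 (R : comNzRingType) n :
  \det (1%:M + const_mx 1 *m (const_mx 1 : 'cV[R]_n)^T) = n.+1%:R.
Proof.
rewrite det1D_mulmx_tr !mxE (eq_bigr (fun _ => 1)) => [|k _]; last first.
  by rewrite !mxE mulr1.
by rewrite sumr_const card_ord addrC natr1.
Qed.

Lemma sqdist_polarization (F : fieldType) d (a b c : 'rV[F]_d) :
  2 * \sum_(k < d) (a 0 k - c 0 k) * (b 0 k - c 0 k)
  = sqdist a c + sqdist b c - sqdist a b.
Proof.
rewrite /sqdist mulr_sumr -big_split -sumrB /=.
by apply: eq_bigr => k _; ring.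
Qed.

Lemma is_squareMsqr (F : fieldType) (a c : F) :
  c != 0 -> is_square (a * c ^+ 2) -> is_square a.
Proof.
move=> c_neq0 [b ac2_eq]; exists (b / c).
by rewrite expr_div_n -ac2_eq mulfK // sqrf_eq0.
Qed.

Section EquilateralSimplex.

Variables (F : fieldType) (d : nat) (l : F) (v : 'I_d.+1 -> 'rV[F]_d).
Hypothesis equilateral : forall i j, i != j -> sqdist (v i) (v j) = l.

Definition edge_mx : 'M[F]_d :=
  \matrix_(i, j) (v (lift ord0 i) 0 j - v ord0 0 j).

Lemma edge_mx_gram :
  2 *: (edge_mx *m edge_mx^T)
  = l *: (1%:M + const_mx 1 *m (const_mx 1 : 'cV[F]_d)^T).
Proof.
apply/matrixP => i j; rewrite !mxE big_ord1 !mxE mulr1.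
under eq_bigr => k _ do rewrite !mxE.
have lift_neq0 (k : 'I_d) : lift ord0 k != ord0 by rewrite eq_sym neq_lift.
have [<-|i_neq_j] := eqVneq i j.
  under eq_bigr => k _ do rewrite -expr2.
  by rewrite -/(sqdist _ _) equilateral ?lift_neq0 // mulr1n; ring.
rewrite sqdist_polarization !equilateral ?lift_neq0 //.
by rewrite mulr0n add0r mulr1 addrK.
Qed.

Lemma edge_mx_det_sqr :
  2 ^+ d * \det edge_mx ^+ 2 = d.+1%:R * l ^+ d.
Proof.
have := congr1 determinant edge_mx_gram.
by rewrite !detZ det_mulmx det_tr det1D_const_mx1 expr2 => ->; rewrite mulrC.
Qed.

End EquilateralSimplex.

Theorem corollary4p4 (F : fieldType) (d : nat) (l : F)
  (hchar : ~~ (2%N \in [pchar F])) (hd : (1 <= d)%N) (hl : l != 0)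
  (v : 'I_d.+1 -> 'rV[F]_d)
  (hv : forall i j : 'I_d.+1, i != j -> sqdist (v i) (v j) = l) :
  is_square ((d.+1)%:R * (l / 2) ^+ d)
  /\ (~~ odd d -> is_square ((d.+1)%:R : F)).
Proof.
have two_neq0 : (2 : F) != 0 by move: hchar; rewrite inE.
have det_sqr : \det (edge_mx v) ^+ 2 = d.+1%:R * (l / 2) ^+ d.
  apply: (mulfI (expf_neq0 d two_neq0)).
  by rewrite (edge_mx_det_sqr hv) expr_div_n; field; rewrite expf_neq0.
split; first by exists (\det (edge_mx v)).
move=> d_even; apply: (@is_squareMsqr _ _ ((l / 2) ^+ d./2)).
  by rewrite expf_neq0 // mulf_neq0 ?invr_eq0.
have half_twice : (d./2 * 2)%N = d.
  by rewrite muln2 -[RHS]odd_double_half (negbTE d_even).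
by rewrite -exprM half_twice -det_sqr; exists (\det (edge_mx v)).
Qed.
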